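(* For any $(a,b,c,\lambda,\delta),(\bar a,\bar b,\bar c,\bar\lambda,\bar\delta)\in(\mathbb F^\times)^4\times\mathbb F$ and any nonzero $\bar w\in W_{\bar\lambda}^{\bar\delta}(\bar a,\bar b,\bar c)$, there exists a $\triangle_q$-module homomorphism $W_\lambda^\delta(a,b,c)\to W_{\bar\lambda}^{\bar\delta}(\bar a,\bar b,\bar c)$ sending $w_0$ to $\bar w$ if and only if (i) there exists a $\triangle_q$-module homomorphism $M_\lambda(a,b,c)\to W_{\bar\lambda}^{\bar\delta}(\bar a,\bar b,\bar c)$ sending $m_0$ to $\bar w$, and (ii) $\delta+a^{d'}\lambda^{-d'}+a^{-d'}\lambda^{d'}=\bar\delta+\bar a^{d'}\bar\lambda^{-d'}+\bar a^{-d'}\bar\lambda^{d'}$.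
   Context: $\mathbb F$ is an algebraically closed field and $q\in\mathbb F^\times$ a root of unity of order $d\notin\{1,2,4\}$; $d'=d$ if $d$ odd, $d'=d/2$ if $d$ even. $\triangle_q$ is the unital associative $\mathbb F$-algebra with generators $A,B,C$ subject to: each of $A+\frac{qBC-q^{-1}CB}{q^2-q^{-2}}$, $B+\frac{qCA-q^{-1}AC}{q^2-q^{-2}}$, $C+\frac{qAB-q^{-1}BA}{q^2-q^{-2}}$ is central; $\alpha,\beta,\gamma$ are these times $q+q^{-1}$. For $(a,b,c,\lambda)\in(\mathbb F^\times)^4$, $i\in\mathbb N$: $\theta_i=a\lambda^{-1}q^{2i}+a^{-1}\lambda q^{-2i}$, $\theta_i^*=b\lambda^{-1}q^{2i}+b^{-1}\lambda q^{-2i}$, $\varphi_i=a^{-1}b^{-1}\lambda q(q^i-q^{-i})(\lambda^{-1}q^{i-1}-\lambda q^{1-i})(q^{-i}-abc\lambda^{-1}q^{i-1})(q^{-i}-abc^{-1}\lambda^{-1}q^{i-1})$. $M_\lambda(a,b,c)$ has basis $\{m_i\}_{i\in\mathbb N}$, $(A-\theta_i)m_i=m_{i+1}$, $(B-\theta_i^* )m_i=\varphi_im_{i-1}$, $\alpha,\beta,\gamma$ acting as $(b+b^{-1})(c+c^{-1})+(a+a^{-1})(\lambda q+\lambda^{-1}q^{-1})$, $(c+c^{-1})(a+a^{-1})+(b+b^{-1})(\lambda q+\lambda^{-1}q^{-1})$, $(a+a^{-1})(b+b^{-1})+(c+c^{-1})(\lambda q+\lambda^{-1}q^{-1})$. For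 $\delta\in\mathbb F$, $W_\lambda^\delta(a,b,c)$ is the quotient of $M_\lambda(a,b,c)$ by the span of $\{\delta m_i-m_{d'+i}\}_{i\in\mathbb N}$, and $w_i$ denotes the image of $m_i$. Barred symbols denote the same objects for the barred parameters. *)

From HB Require Import structures.
From mathcomp Require Import all_boot all_order all_algebra.
Set Implicit Arguments. Unset Strict Implicit. Unset Printing Implicit Defensive.
Import Order.TTheory GRing.Theory Num.Theory.
Local Open Scope ring_scope.

Definition dprime (d : nat) : nat := if odd d then d else d./2.

Section AW.
Variable F : fieldType.
Variable q : F.

Definition theta (a lam : F) (i : nat) : F :=
  a * lam^-1 * q ^+ (2 * i) + a^-1 * lam * q ^- (2 * i).
Definition thetas (b lam : F) (i : nat) : F :=
  b * lam^-1 * q ^+ (2 * i) + b^-1 * lam * q ^- (2 * i).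
Definition phi (a b c lam : F) (i : nat) : F :=
  a^-1 * b^-1 * lam * q * (q ^+ i - q ^- i)
  * (lam^-1 * q ^ (i%:Z - 1) - lam * q ^ (1 - i%:Z))
  * (q ^- i - a * b * c * lam^-1 * q ^ (i%:Z - 1))
  * (q ^- i - a * b * c^-1 * lam^-1 * q ^ (i%:Z - 1)).

(* scalar by which gamma acts on M_lam(a,b,c) *)
Definition gammaM (a b c lam : F) : F :=
  (a + a^-1) * (b + b^-1) + (c + c^-1) * (lam * q + lam^-1 * q^-1).

(* The module M_lam(a,b,c): the vector space {poly F} with basis m_i = 'X^i. *)
Definition AM (a b c lam : F) (p : {poly F}) : {poly F} :=
  \sum_(i < size p) p`_i *: (theta a lam i *: 'X^i + 'X^(i.+1)).
Definition BM (a b c lam : F) (p : {poly F}) : {poly F} :=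
  \sum_(i < size p) p`_i *: (thetas b lam i *: 'X^i + phi a b c lam i *: 'X^(i.-1)).
(* C is determined by the central element gamma:
   gamma = (q+q^-1) (C + (qAB - q^-1 BA)/(q^2-q^-2)) *)
Definition CM (a b c lam : F) (p : {poly F}) : {poly F} :=
  (gammaM a b c lam / (q + q^-1)) *: p
  - (q^+2 - q^-2)^-1 *: (q *: AM a b c lam (BM a b c lam p)
                          - q^-1 *: BM a b c lam (AM a b c lam p)).

(* The quotient W^delta_lam(a,b,c) of M_lam(a,b,c) by the span of
   {delta m_i - m_{d'+i}}, i.e. by the ideal ('X^d' - delta) of F[X].
   It is modelled on 'rV_n (n = d'), through the projection piW (coordinates of
   the remainder mod 'X^n - delta in the basis w_0..w_{n-1}) and the section
   liftW; the actions on W are induced from M. *)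
Definition piW (n : nat) (delta : F) (p : {poly F}) : 'rV[F]_n :=
  \row_(i < n) (p %% ('X^n - delta%:P))`_i.
Definition liftW (n : nat) (v : 'rV[F]_n) : {poly F} := \sum_(i < n) v 0 i *: 'X^i.

Definition AW n delta a b c lam (v : 'rV[F]_n) : 'rV[F]_n :=
  piW n delta (AM a b c lam (liftW v)).
Definition BW n delta a b c lam (v : 'rV[F]_n) : 'rV[F]_n :=
  piW n delta (BM a b c lam (liftW v)).
Definition CW n delta a b c lam (v : 'rV[F]_n) : 'rV[F]_n :=
  piW n delta (CM a b c lam (liftW v)).

Definition wvec n delta (i : nat) : 'rV[F]_n := piW n delta 'X^i.

End AW.

Definition intertwines (U V : Type) (f : U -> V) (X : U -> U) (Y : V -> V) :=
  forall u, f (X u) = Y (f u).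

Definition homMW (F : fieldType) (q : F) (n : nat)
  (a b c lam : F) (dbar abar bbar cbar lbar : F) (f : {poly F} -> 'rV[F]_n) :=
  linear f /\
  [/\ intertwines f (AM q a b c lam) (AW q dbar abar bbar cbar lbar),
      intertwines f (BM q a b c lam) (BW q dbar abar bbar cbar lbar) &
      intertwines f (CM q a b c lam) (CW q dbar abar bbar cbar lbar)].

Definition homWW (F : fieldType) (q : F) (n : nat)
  (delta a b c lam : F) (dbar abar bbar cbar lbar : F) (f : 'rV[F]_n -> 'rV[F]_n) :=
  linear f /\
  [/\ intertwines f (AW q delta a b c lam) (AW q dbar abar bbar cbar lbar),
      intertwines f (BW q delta a b c lam) (BW q dbar abar bbar cbar lbar) &
      intertwines f (CW q delta a b c lam) (CW q dbar abar bbar cbar lbar)].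

(* Identify M_lam(a,b,c) with F[X] through m_i = X^i, so that W^delta is
   F[X]/(X^d' - delta) and m_i = (A - theta_(i-1)) ... (A - theta_0) m_0.
   As q^2 is a primitive d'-th root of unity, theta_i, theta*_i and phi_i are
   d'-periodic and phi_0 = phi_d' = 0, so A, B, C preserve the ideal
   (X^d' - delta): homomorphisms out of W^delta are the homomorphisms out of
   M_lam that kill it.  The operator P = prod_(i < d') (A - theta_i) maps m_j
   to m_(j+d').  Since prod_(i < d') (x - t q^(2i) - t^-1 q^(-2i)) + t^d' + t^-d'
   does not depend on t (put x = u + u^-1), P acts on W^dbar(abar, ...) as the
   scalar dbar + S(abar, lbar) - S(a, lam), where S(a, lam) = a^d' lam^-d' +
   a^-d' lam^d': indeed the same product built on (abar, lbar) acts there as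
   dbar.  Hence a homomorphism g : M_lam -> W^dbar satisfies
   g (X^j (X^d' - delta)) = (dbar + S(abar, lbar) - delta - S(a, lam)) g(X^j),
   which vanishes for all j iff (ii) holds, as g(m_0) <> 0. *)

From HB Require Import structures.
From mathcomp Require Import all_boot all_order all_algebra.
From mathcomp Require Import ring.
Set Implicit Arguments. Unset Strict Implicit. Unset Printing Implicit Defensive.
Import GRing.Theory.
Local Open Scope ring_scope.

Section PolyLinear.
Variables (F : fieldType) (V : lmodType F).

Definition coef_comb (w : nat -> V) (p : {poly F}) : V := \sum_(i < size p) p`_i *: w i.

Lemma coef_comb_widen (w : nat -> V) (p : {poly F}) N :
  (size p <= N)%N -> coef_comb w p = \sum_(i < N) p`_i *: w i.
Proof.
move=> le_pN; rewrite /coef_comb (big_ord_widen N (fun i => p`_i *: w i) le_pN) big_mkcond.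
apply: eq_bigr => i _; case: ltnP => // le_p_i.
by rewrite nth_default // scale0r.
Qed.

Lemma coef_comb_is_linear w : linear (coef_comb w).
Proof.
move=> k p r; set N := maxn (size (k *: p + r)) (maxn (size p) (size r)).
have [le_pN le_rN] : (size p <= N)%N /\ (size r <= N)%N.
  by split; rewrite /N !leq_max leqnn !orbT.
rewrite !(@coef_comb_widen _ _ N) ?leq_maxl //.
rewrite scaler_sumr -big_split; apply: eq_bigr => i _.
by rewrite coefD coefZ scalerDl scalerA.
Qed.

HB.instance Definition _ w :=
  GRing.isLinear.Build F {poly F} V *:%R (coef_comb w) (coef_comb_is_linear w).

Lemma coef_comb_Xn w j : coef_comb w 'X^j = w j.
Proof.
rewrite /coef_comb size_polyXn big_ord_recr /= coefXn eqxx scale1r big1 ?add0r //.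
by move=> i _; rewrite coefXn ltn_eqF // scale0r.
Qed.

Lemma coef_comb_mulX w p : coef_comb w ('X * p) = coef_comb (fun i => w i.+1) p.
Proof.
rewrite (@coef_comb_widen _ _ (size p).+1); last first.
  by rewrite (leq_trans (size_polyMleq _ _)) // size_polyX add2n.
by rewrite big_ord_recl coefXM scale0r add0r; apply: eq_bigr => i _; rewrite coefXM.
Qed.

Definition poly_act (A : V -> V) (v : V) : {poly F} -> V := coef_comb (fun i => iter i A v).

HB.instance Definition _ A v :=
  GRing.isLinear.Build F {poly F} V *:%R (poly_act A v) (coef_comb_is_linear _).

Lemma poly_act1 (A : V -> V) v : poly_act A v 1 = v.
Proof. by rewrite -(expr0 ('X : {poly F})) /poly_act coef_comb_Xn. Qed.

Lemma poly_act_mulX (A : {linear V -> V}) v p :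
  poly_act A v ('X * p) = A (poly_act A v p).
Proof.
rewrite /poly_act coef_comb_mulX /coef_comb linear_sum; apply: eq_bigr => i _.
by rewrite linearZ.
Qed.

End PolyLinear.

Lemma linear_mul_expand (F : fieldType) (V : lmodType F)
    (g : {linear {poly F} -> V}) r s :
  g (r * s) = \sum_(i < size r) r`_i *: g ('X^i * s).
Proof.
rewrite -{1}[r]coefK poly_def mulr_suml linear_sum.
by apply: eq_bigr => i _; rewrite -scalerAl linearZ.
Qed.

Section Quotient.
Variables (F : fieldType) (n : nat) (delta : F).
Hypothesis n_gt0 : (0 < n)%N.
Local Notation m := ('X^n - delta%:P : {poly F}).

Lemma mulXn_XnsubC j : 'X^j * m = 'X^(j + n) - delta *: 'X^j.
Proof. by rewrite mulrBr -exprD [_ * _%:P]mulrC mul_polyC. Qed.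

Lemma piW_is_linear : linear (piW n delta).
Proof. by move=> k p r; apply/rowP => i; rewrite !mxE modpD modpZl coefD coefZ. Qed.

HB.instance Definition _ :=
  GRing.isLinear.Build F {poly F} 'rV[F]_n *:%R (piW n delta) piW_is_linear.

Lemma liftW_is_linear : linear (@liftW F n).
Proof.
move=> k v w; rewrite /liftW scaler_sumr -big_split; apply: eq_bigr => i _.
by rewrite !mxE scalerDl scalerA.
Qed.

HB.instance Definition _ :=
  GRing.isLinear.Build F 'rV[F]_n {poly F} *:%R (@liftW F n) liftW_is_linear.

Lemma liftW_poly (v : 'rV[F]_n) :
  liftW v = \poly_(i < n) (if insub i is Some j then v 0 j else 0).
Proof. by rewrite poly_def; apply: eq_bigr => i _; rewrite valK. Qed.

Lemma liftWK : cancel (@liftW F n) (piW n delta).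
Proof.
move=> v; apply/rowP => i; rewrite mxE modp_small; last first.
  by rewrite size_XnsubC // liftW_poly ltnS size_poly.
by rewrite liftW_poly coef_poly ltn_ord valK.
Qed.

Lemma liftW_piW p : liftW (piW n delta p) = p %% m.
Proof.
rewrite /liftW; under eq_bigr do rewrite mxE.
rewrite -poly_def; apply/polyP => i; rewrite coef_poly; case: ltnP => // le_n_i.
rewrite nth_default // (leq_trans _ le_n_i) // -ltnS -(size_XnsubC delta n_gt0).
by rewrite ltn_modp -size_poly_eq0 size_XnsubC.
Qed.

Lemma piW_eq0 p : m %| p -> piW n delta p = 0.
Proof. by move=> /modp_eq0 mp0; apply/rowP => i; rewrite !mxE mp0 coef0. Qed.

Lemma piW_XnD j : piW n delta 'X^(j + n) = delta *: piW n delta 'X^j.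
Proof.
apply/eqP; rewrite -linearZ -subr_eq0 -linearB; apply/eqP/piW_eq0.
by rewrite -mulXn_XnsubC dvdp_mulIr.
Qed.

Lemma piW_ker_factor {V : lmodType F} (g : {linear {poly F} -> V}) :
  (forall j, g ('X^j * m) = 0) -> forall p, g (liftW (piW n delta p)) = g p.
Proof.
move=> gm0 p; rewrite liftW_piW {2}(divp_eq p m) linearD linear_mul_expand.
by rewrite big1 ?add0r // => i _; rewrite gm0 scaler0.
Qed.

Lemma ideal_stable (T : {linear {poly F} -> {poly F}}) :
  (forall j, m %| T ('X^j * m)) -> forall p, m %| p -> m %| T p.
Proof.
move=> Tm p /dvdpP [r ->]; rewrite linear_mul_expand.
apply: (big_ind (fun x => m %| x)) => [|x y|i _]; [exact: dvdp0 | exact: dvdp_add |].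
by rewrite /= -mul_polyC dvdp_mull.
Qed.

Lemma piW_induced (T : {linear {poly F} -> {poly F}}) :
  (forall p, m %| p -> m %| T p) ->
  forall p, piW n delta (T (liftW (piW n delta p))) = piW n delta (T p).
Proof.
move=> Tm; apply: (piW_ker_factor (g := piW n delta \o T)) => j /=.
by apply/piW_eq0/Tm/dvdp_mull.
Qed.

End Quotient.

Section Periodicity.
Variables (F : fieldType) (q : F) (n : nat).
Hypothesis q_neq0 : q != 0.
Hypothesis q2n : (q ^+ 2) ^+ n = 1.

Lemma expr_order_sqr : q ^+ n * q ^+ n = 1.
Proof. by rewrite -exprD addnn -mul2n exprM. Qed.

Lemma invr_expr_order : (q ^+ n)^-1 = q ^+ n.
Proof. by rewrite -[LHS]mulr1 -expr_order_sqr mulKf // expf_neq0. Qed.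

Lemma theta_addn a lam i : theta q a lam (i + n) = theta q a lam i.
Proof. by rewrite /theta mulnDr exprD (exprM q 2 n) q2n mulr1. Qed.

Lemma thetas_addn b lam i : thetas q b lam (i + n) = thetas q b lam i.
Proof. by rewrite /thetas mulnDr exprD (exprM q 2 n) q2n mulr1. Qed.

(* Each of the four factors of [phi (i + n)] is [q ^+ n] times that of [phi i],
   and [(q ^+ n) ^+ 2 = 1]. *)
Lemma phi_addn a b c lam i : phi q a b c lam (i + n) = phi q a b c lam i.
Proof.
set e := q ^+ n.
have eXn : q ^+ (i + n) = e * q ^+ i by rewrite exprD mulrC.
have eXVn : q ^- (i + n) = e * q ^- i by rewrite exprD invfM invr_expr_order mulrC.
have eXz1 : q ^ ((i + n)%N%:Z - 1) = e * q ^ (i%:Z - 1).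
  by rewrite PoszD addrAC (expfzDr (i%:Z - 1)) // -exprnP mulrC.
have eXz2 : q ^ (1 - (i + n)%N%:Z) = e * q ^ (1 - i%:Z).
  by rewrite PoszD opprD addrA (expfzDr (1 - i%:Z)) // -exprnN invr_expr_order mulrC.
rewrite {1}/phi eXVn eXn eXz1 eXz2.
transitivity (phi q a b c lam i * ((e * e) * (e * e))); first by rewrite /phi; ring.
by rewrite /e expr_order_sqr !mulr1.
Qed.

Lemma phi0 a b c lam : phi q a b c lam 0 = 0.
Proof. by rewrite /phi expr0 invr1 subrr !mulr0 !mul0r. Qed.

Lemma phi_order a b c lam : phi q a b c lam n = 0.
Proof. by rewrite /phi invr_expr_order subrr !mulr0 !mul0r. Qed.

End Periodicity.

Section ModuleM.
Variables (F : fieldType) (q a b c lam : F).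

Lemma AM_is_linear : linear (AM q a b c lam).
Proof. exact: (coef_comb_is_linear (fun i => theta q a lam i *: 'X^i + 'X^(i.+1))). Qed.

HB.instance Definition _ :=
  GRing.isLinear.Build F {poly F} {poly F} *:%R (AM q a b c lam) AM_is_linear.

Lemma BM_is_linear : linear (BM q a b c lam).
Proof.
exact: (coef_comb_is_linear (fun i => thetas q b lam i *: 'X^i + phi q a b c lam i *: 'X^(i.-1))).
Qed.

HB.instance Definition _ :=
  GRing.isLinear.Build F {poly F} {poly F} *:%R (BM q a b c lam) BM_is_linear.

Lemma AM_Xn j : AM q a b c lam 'X^j = theta q a lam j *: 'X^j + 'X^(j.+1).
Proof. exact: (coef_comb_Xn (fun i => theta q a lam i *: 'X^i + 'X^(i.+1))). Qed.

Lemma BM_Xn j :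
  BM q a b c lam 'X^j = thetas q b lam j *: 'X^j + phi q a b c lam j *: 'X^(j.-1).
Proof.
exact: (coef_comb_Xn (fun i => thetas q b lam i *: 'X^i + phi q a b c lam i *: 'X^(i.-1))).
Qed.

Lemma CM_is_linear : linear (CM q a b c lam).
Proof.
move=> k u v; rewrite /CM !(linearP (BM q a b c lam), linearP (AM q a b c lam)) /=.
by rewrite -!mul_polyC; ring.
Qed.

HB.instance Definition _ :=
  GRing.isLinear.Build F {poly F} {poly F} *:%R (CM q a b c lam) CM_is_linear.

End ModuleM.

Section ModuleW.
Variables (F : fieldType) (q : F) (n : nat) (delta a b c lam : F).
Hypotheses (q2n : (q ^+ 2) ^+ n = 1) (n_gt0 : (0 < n)%N).
Local Notation m := ('X^n - delta%:P : {poly F}).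

Let q_neq0 : q != 0.
Proof.
apply: contra_eq_neq q2n => ->.
by rewrite -exprM expr0n muln_eq0 orFb eqn0Ngt n_gt0 eq_sym oner_neq0.
Qed.

Lemma AM_mul_XnsubC j : AM q a b c lam ('X^j * m) = AM q a b c lam 'X^j * m.
Proof.
rewrite mulXn_XnsubC linearB linearZ /= !AM_Xn theta_addn // -!mul_polyC.
by rewrite !exprS exprD; ring.
Qed.

Lemma BM_mul_XnsubC j : BM q a b c lam ('X^j * m) = BM q a b c lam 'X^j * m.
Proof.
rewrite mulXn_XnsubC linearB linearZ /= !BM_Xn thetas_addn // -!mul_polyC.
case: j => [|j]; last by rewrite phi_addn // addSn /= !exprS exprD; ring.
by rewrite add0n phi_order // phi0 !mul0r; ring.
Qed.

Lemma AM_ideal p : m %| p -> m %| AM q a b c lam p.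
Proof. by apply: ideal_stable => j /=; rewrite AM_mul_XnsubC dvdp_mull. Qed.

Lemma BM_ideal p : m %| p -> m %| BM q a b c lam p.
Proof. by apply: ideal_stable => j /=; rewrite BM_mul_XnsubC dvdp_mull. Qed.

Lemma CM_ideal p : m %| p -> m %| CM q a b c lam p.
Proof.
move=> mp; rewrite /CM -!mul_polyC.
apply: dvdp_sub; first exact: dvdp_mull.
apply/dvdp_mull/dvdp_sub; apply: dvdp_mull.
  by apply: AM_ideal; apply: BM_ideal.
by apply: BM_ideal; apply: AM_ideal.
Qed.

Lemma piW_AM p : piW n delta (AM q a b c lam p) = AW q delta a b c lam (piW n delta p).
Proof. by rewrite /AW piW_induced //; exact: AM_ideal. Qed.

Lemma piW_BM p : piW n delta (BM q a b c lam p) = BW q delta a b c lam (piW n delta p).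
Proof. by rewrite /BW piW_induced //; exact: BM_ideal. Qed.

Lemma piW_CM p : piW n delta (CM q a b c lam p) = CW q delta a b c lam (piW n delta p).
Proof. by rewrite /CW piW_induced //; exact: CM_ideal. Qed.

End ModuleW.

Lemma AW_is_linear (F : fieldType) (q : F) n (delta a b c lam : F) :
  linear (@AW F q n delta a b c lam).
Proof. by move=> k u v; rewrite /AW !linearP. Qed.

HB.instance Definition _ (F : fieldType) (q : F) n (delta a b c lam : F) :=
  GRing.isLinear.Build F 'rV[F]_n 'rV[F]_n *:%R (@AW F q n delta a b c lam)
    (AW_is_linear q delta a b c lam).

Fixpoint newton (F : fieldType) (V : lmodType F) (A : V -> V) (th : nat -> F) j v : V :=
  if j is j.+1 then A (newton A th j v) - th j *: newton A th j v else v.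

Section Newton.
Variables (F : fieldType) (V : lmodType F).

Lemma newton_hom (U : lmodType F) (f : {linear U -> V}) (A : U -> U) (B : V -> V) th j u :
  intertwines f A B -> f (newton A th j u) = newton B th j (f u).
Proof. by move=> fAB; elim: j => //= j <-; rewrite linearB linearZ fAB. Qed.

Lemma newton_ext (A : V -> V) th th' j v :
  {in gtn j, th =1 th'} -> newton A th j v = newton A th' j v.
Proof.
elim: j => //= j IHj eq_th; rewrite eq_th ?inE // IHj // => i lt_ij.
by rewrite eq_th // inE ltnS ltnW.
Qed.

Variable A : {linear V -> V}.

Lemma newton_is_linear th j : linear (newton A th j).
Proof.
move=> k u v; elim: j => //= j ->.
by rewrite linearP scalerBr !scalerA mulrC -!scalerA addrACA -opprD scalerDr.
Qed.

HB.instance Definition _ th j :=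
  GRing.isLinear.Build F V V *:%R (newton A th j) (newton_is_linear th j).

Lemma newton_comm th j v : newton A th j (A v) = A (newton A th j v).
Proof. by rewrite (newton_hom (f := A) (B := A)). Qed.

Lemma newton_poly_act th j v :
  newton A th j v = poly_act A v (\prod_(i < j) ('X - (th i)%:P)).
Proof.
elim: j => [|j IHj] /=; first by rewrite big_ord0 poly_act1.
rewrite big_ord_recr /= mulrBr linearB /= [_ * 'X]mulrC [_ * _%:P]mulrC mul_polyC.
by rewrite poly_act_mulX IHj [poly_act A v (_ *: _)]linearZ.
Qed.

End Newton.

Section Chebyshev.
Variables (F : closedFieldType) (n : nat) (z : F).
Hypothesis z_prim : n.-primitive_root z.

Let n_gt0 : (0 < n)%N := prim_order_gt0 z_prim.

Lemma prim_root_neq0 : z != 0.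
Proof. by rewrite (prim_root_eq0 z_prim) -lt0n n_gt0. Qed.

Lemma prim_rootV : n.-primitive_root z^-1.
Proof.
have -> : z^-1 = z ^+ n.-1.
  apply: (mulIf prim_root_neq0).
  by rewrite mulVf ?prim_root_neq0 // -exprSr prednK // prim_expr_order.
by rewrite (prim_root_exp_coprime _ z_prim); case: n n_gt0 => // k _; exact: coprimenS.
Qed.

Lemma prod_sub_prim_root (w s u : F) : n.-primitive_root w -> s != 0 ->
  \prod_(i < n) (u - s * w ^+ i) = u ^+ n - s ^+ n.
Proof.
move=> w_prim s_neq0.
have := congr1 (fun p => p.[u / s]) (factor_Xn_sub_1 w_prim).
rewrite /= horner_prod big_mkord hornerD hornerN hornerXn hornerC => prod_us.
transitivity (\prod_(i < n) (s * (u / s - w ^+ i))).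
  by apply: eq_bigr => i _; field.
rewrite big_split /= prodr_const card_ord.
under eq_bigr do rewrite -hornerXsubC.
by rewrite prod_us exprMn exprVn; field; rewrite expf_neq0.
Qed.

Definition cheb_node (t : F) (i : nat) : F := t * z ^+ i + t^-1 * z ^- i.

(* [x = u + u^-1] turns the product into [u^-n (u^n - t^n)(u^n - t^-n)]. *)
Lemma prod_cheb_node (t u : F) : t != 0 -> u != 0 ->
  \prod_(i < n) (u + u^-1 - cheb_node t i) = u ^+ n + u ^- n - (t ^+ n + t ^- n).
Proof.
move=> t_neq0 u_neq0.
transitivity (\prod_(i < n) (u^-1 * ((u - t * z ^+ i) * (u - t^-1 * z^-1 ^+ i)))).
  apply: eq_bigr => i _; rewrite /cheb_node exprVn.
  have zi_neq0 : z ^+ i != 0 by rewrite expf_neq0 // prim_root_neq0.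
  by field; rewrite zi_neq0 t_neq0 u_neq0.
rewrite !big_split /= prodr_const card_ord.
rewrite (prod_sub_prim_root _ z_prim) // (prod_sub_prim_root _ prim_rootV) ?invr_eq0 //.
by rewrite !exprVn; field; rewrite !expf_neq0.
Qed.

Lemma cheb_poly_indep (t s : F) : t != 0 -> s != 0 ->
  \prod_(i < n) ('X - (cheb_node t i)%:P) + (t ^+ n + t ^- n)%:P
  = \prod_(i < n) ('X - (cheb_node s i)%:P) + (s ^+ n + s ^- n)%:P.
Proof.
(* Over an algebraically closed field every [x] is some [u + u^-1]. *)
move=> t_neq0 s_neq0; apply/eqP; rewrite -subr_eq0.
apply/negPn/negP => /closed_nonrootP [x]; apply/negP/negPn.
have [u u_root] := @solve_monicpoly F 2 (fun i => if i == 0%N then -1 else x) isT.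
rewrite !big_ord_recr big_ord0 /= add0r mulr1 expr1 in u_root.
have u_neq0 : u != 0.
  move: u_root; apply: contra_eq_neq => ->.
  by rewrite expr0n mulr0 addr0 eq_sym oppr_eq0 oner_neq0.
have -> : x = u + u^-1.
  by apply: (mulIf u_neq0); rewrite mulrDl mulVf // -expr2 u_root; ring.
rewrite /root !(hornerD, hornerN, horner_prod, hornerC).
under eq_bigr do rewrite hornerXsubC.
under [X in _ - (X + _)]eq_bigr do rewrite hornerXsubC.
by rewrite !prod_cheb_node // subr_eq0; apply/eqP; ring.
Qed.

Lemma newton_cheb_indep (V : lmodType F) (A : {linear V -> V}) (v : V) (t s : F) :
  t != 0 -> s != 0 ->
  newton A (cheb_node t) n v + (t ^+ n + t ^- n) *: v
  = newton A (cheb_node s) n v + (s ^+ n + s ^- n) *: v.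
Proof.
move=> t_neq0 s_neq0.
have addC (P : {poly F}) k : poly_act A v P + k *: v = poly_act A v (P + k%:P).
  by rewrite linearD /= -[k%:P]mulr1 mul_polyC linearZ /= poly_act1.
by rewrite !newton_poly_act !addC (cheb_poly_indep t_neq0 s_neq0).
Qed.

End Chebyshev.

Section NewtonM.
Variables (F : fieldType) (q a b c lam : F).

Lemma newton_AM1 j : newton (AM q a b c lam) (theta q a lam) j 1 = 'X^j.
Proof. by elim: j => [|j /= ->]; rewrite ?expr0 // AM_Xn addrAC subrr add0r. Qed.

Variable n : nat.
Hypothesis q2n : (q ^+ 2) ^+ n = 1.

Lemma newton_AM_Xn j : newton (AM q a b c lam) (theta q a lam) n 'X^j = 'X^(j + n).
Proof.
elim: j => [|j IHj]; first by rewrite expr0 newton_AM1.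
have -> : 'X^(j.+1) = AM q a b c lam 'X^j - theta q a lam j *: 'X^j.
  by rewrite AM_Xn addrAC subrr add0r.
rewrite linearB linearZ /= newton_comm /= IHj AM_Xn (theta_addn q2n) addSn.
by rewrite addrAC subrr add0r.
Qed.

Lemma newton_AW (delta : F) (n_gt0 : (0 < n)%N) (v : 'rV[F]_n) :
  newton (AW q delta a b c lam) (theta q a lam) n v = delta *: v.
Proof.
rewrite -[v](liftWK delta n_gt0).
rewrite -(newton_hom (f := piW n delta) (A := AM q a b c lam)); last exact: piW_AM.
rewrite /liftW !linear_sum; apply: eq_bigr => i _ /=.
by rewrite !linearZ /= newton_AM_Xn piW_XnD // scalerCA.
Qed.

End NewtonM.

Lemma dprime_prim_root (F : fieldType) (q : F) d :
  d.-primitive_root q -> (dprime d).-primitive_root (q ^+ 2).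
Proof.
move=> q_prim; have := exp_prim_root q_prim 2; rewrite /dprime.
case: ifP => [d_odd | d_even].
  have /eqP -> : coprime 2 d by rewrite coprime2n d_odd.
  by rewrite divn1.
have /gcdn_idPl -> : (2 %| d)%N by rewrite dvdn2 d_even.
by rewrite divn2.
Qed.

Definition lin_of (F : fieldType) (U V : lmodType F) (f : U -> V) (f_lin : linear f) :
  {linear U -> V} := HB.pack f (GRing.isLinear.Build F U V *:%R f f_lin).

Section ActionOnWbar.
Variables (F : closedFieldType) (q : F) (n : nat).
Hypothesis q2_prim : n.-primitive_root (q ^+ 2).
Variables (a b c lam delta abar bbar cbar lbar dbar : F).
Hypotheses (a_neq0 : a != 0) (lam_neq0 : lam != 0).
Hypotheses (abar_neq0 : abar != 0) (lbar_neq0 : lbar != 0).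

Let q2n : (q ^+ 2) ^+ n = 1 := prim_expr_order q2_prim.
Let n_gt0 : (0 < n)%N := prim_order_gt0 q2_prim.
Local Notation m := ('X^n - delta%:P : {poly F}).

Lemma theta_cheb_node (t u : F) i : theta q t u i = cheb_node (q ^+ 2) (t / u) i.
Proof. by rewrite /theta /cheb_node -!exprM invfM invrK mulrC. Qed.

Lemma newton_AW_theta (v : 'rV[F]_n) :
  newton (AW q dbar abar bbar cbar lbar) (theta q a lam) n v
    + (a ^+ n * lam ^- n + a ^- n * lam ^+ n) *: v
  = (dbar + abar ^+ n * lbar ^- n + abar ^- n * lbar ^+ n) *: v.
Proof.
have powE (t u : F) : (t / u) ^+ n + (t / u) ^- n = t ^+ n * u ^- n + t ^- n * u ^+ n.
  by rewrite exprMn exprVn invfM invrK.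
rewrite -powE (newton_ext _ (th' := cheb_node (q ^+ 2) (a / lam))) => [|i _]; last first.
  exact: theta_cheb_node.
rewrite (newton_cheb_indep q2_prim _ _ (s := abar / lbar)) ?mulf_neq0 ?invr_eq0 //.
rewrite -(newton_ext _ (th := theta q abar lbar)) => [|i _]; last exact: theta_cheb_node.
by rewrite newton_AW // powE -scalerDl addrA.
Qed.

Lemma homMW_mul_XnsubC (g : {poly F} -> 'rV[F]_n) j :
  homMW q a b c lam dbar abar bbar cbar lbar g ->
  g ('X^j * m) = (dbar + abar ^+ n * lbar ^- n + abar ^- n * lbar ^+ n
                  - (delta + a ^+ n * lam ^- n + a ^- n * lam ^+ n)) *: g 'X^j.
Proof.
move=> [g_lin [gA _ _]]; pose gL := lin_of g_lin.
have gXnD : gL 'X^(j + n) = newton (AW q dbar abar bbar cbar lbar) (theta q a lam) n (gL 'X^j).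
  by rewrite -(newton_hom (f := gL) _ _ _ gA) newton_AM_Xn.
rewrite -[g (_ * _)]/(gL (_ * _)) -[g 'X^j]/(gL 'X^j).
rewrite mulXn_XnsubC linearB linearZ gXnD.
apply: (addIr ((a ^+ n * lam ^- n + a ^- n * lam ^+ n) *: gL 'X^j)).
by rewrite addrAC newton_AW_theta -!scalerBl -!scalerDl; congr (_ *: _); ring.
Qed.

End ActionOnWbar.

Section Descent.
Variables (F : fieldType) (q : F) (n : nat).
Hypotheses (q2n : (q ^+ 2) ^+ n = 1) (n_gt0 : (0 < n)%N).
Variables (delta a b c lam dbar abar bbar cbar lbar : F).

Lemma homWW_comp_piW (f : 'rV[F]_n -> 'rV[F]_n) :
  homWW q delta a b c lam dbar abar bbar cbar lbar f ->
  homMW q a b c lam dbar abar bbar cbar lbar (f \o piW n delta).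
Proof.
move=> [f_lin [fA fB fC]]; split; first by move=> k u v; rewrite /= linearP f_lin.
by split=> p /=; [rewrite piW_AM // fA | rewrite piW_BM // fB | rewrite piW_CM // fC].
Qed.

Lemma homMW_descends (g : {poly F} -> 'rV[F]_n) :
  homMW q a b c lam dbar abar bbar cbar lbar g ->
  (forall j, g ('X^j * ('X^n - delta%:P)) = 0) ->
  exists2 f, homWW q delta a b c lam dbar abar bbar cbar lbar f
           & forall p, f (piW n delta p) = g p.
Proof.
move=> [g_lin [gA gB gC]] g_ideal.
have descend p : g (liftW (piW n delta p)) = g p.
  exact: (piW_ker_factor n_gt0 (g := lin_of g_lin)).
exists (g \o @liftW F n) => //; split; first by move=> k u v; rewrite /= linearP g_lin.
by split=> v /=; rewrite /AW /BW /CW !descend.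
Qed.

End Descent.

Theorem proposition7p3 (F : closedFieldType) (q : F) (d : nat)
  (hq : d.-primitive_root q) (hd1 : d <> 1%N) (hd2 : d <> 2%N) (hd4 : d <> 4%N)
  (a b c lam delta abar bbar cbar lbar dbar : F)
  (ha : a != 0) (hb : b != 0) (hc : c != 0) (hl : lam != 0)
  (hab : abar != 0) (hbb : bbar != 0) (hcb : cbar != 0) (hlb : lbar != 0)
  (wbar : 'rV[F]_(dprime d)) (hw : wbar != 0) :
  (exists f : 'rV[F]_(dprime d) -> 'rV[F]_(dprime d),
      homWW q delta a b c lam dbar abar bbar cbar lbar f
      /\ f (wvec (dprime d) delta 0) = wbar)
  <->
  ((exists g : {poly F} -> 'rV[F]_(dprime d),
      homMW q a b c lam dbar abar bbar cbar lbar g /\ g 1 = wbar)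
   /\ delta + a ^+ dprime d * lam ^- dprime d + a ^- dprime d * lam ^+ dprime d
      = dbar + abar ^+ dprime d * lbar ^- dprime d
             + abar ^- dprime d * lbar ^+ dprime d).
Proof.
have q2_prim := dprime_prim_root hq.
have q2n := prim_expr_order q2_prim; have n_gt0 := prim_order_gt0 q2_prim.
rewrite /wvec expr0; split.
- move=> [f [f_hom f_w0]]; have g_hom := homWW_comp_piW q2n n_gt0 f_hom.
  split; first by exists (f \o piW (dprime d) delta).
  have f0 : f 0 = 0 := linear0 (lin_of f_hom.1).
  have := homMW_mul_XnsubC q2_prim delta ha hl hab hlb 0 g_hom.
  rewrite /= mul1r expr0 f_w0 piW_eq0 // f0 => /esym /eqP.
  by rewrite scaler_eq0 (negPf hw) orbF subr_eq0 => /eqP.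
- move=> [[g [g_hom g1]] cond].
  have g_ideal j : g ('X^j * ('X^(dprime d) - delta%:P)) = 0.
    by rewrite (homMW_mul_XnsubC q2_prim delta ha hl hab hlb j g_hom) cond subrr scale0r.
  have [f f_hom f_piW] := homMW_descends n_gt0 g_hom g_ideal.
  by exists f; rewrite f_piW.
Qed.
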